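(* Let $H\in\mathbb{R}^{\ell\times\ell}$ be symmetric, $0\ne g_0\in\mathbb{R}^\ell$, $\gamma>0$, and consider pLGopt and pQEPmin defined in the context. (1) Let $(\lambda_*,y_* )$ be a minimizer of pLGopt. Then either $\lambda_*<\lambda_{\min}(H)$ or $\lambda_*=\lambda_{\min}(H)$, and there exists $w_*$ such that $(\lambda_*,w_* )$ is a minimizer of pQEPmin; specifically $w_*=(H-\lambda_*I)^{-1}y_*$ if $\lambda_*<\lambda_{\min}(H)$, and $w_*$ is a corresponding eigenvector of $H$ if $\lambda_*=\lambda_{\min}(H)$. (2) Conversely, if $(\lambda_*,w_* )$ is a minimizer of pQEPmin, then there exists $y_*$ such that $(\lambda_*,y_* )$ is a minimizer of pLGopt; specifically $y_*=-\frac{\gamma^2}{g_0^{\top}w_*}(H-\lambda_*I)w_*$ if $g_0^{\top}w_*\ne0$, and $y_*=x_*+\sqrt{\gamma^2-\|x_*\|^2}\,\frac{w_*}{\|w_*\|}$ if $g_0^{\top}w_*=0$, where in the latter case $x_*=-(H-\lambda_*I)^{\dagger}g_0$, and it is guaranteed that $\|x_*\|\le\gamma$.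
   Context: pLGopt: minimize $\lambda$ over pairs $(\lambda,y)\in\mathbb{R}\times\mathbb{R}^\ell$ with $(H-\lambda I)y=-g_0$ and $\|y\|=\gamma$. pQEPmin: minimize $\lambda$ over pairs $(\lambda,w)$ with $\lambda\in\mathbb{R}$, $0\ne w\in\mathbb{R}^\ell$ and $(H-\lambda I)^2w=\gamma^{-2}g_0g_0^{\top}w$. $\lambda_{\min}(H)$ is the smallest eigenvalue of $H$; $X^\dagger$ is the Moore–Penrose inverse; norms are Euclidean. *)

From HB Require Import structures.
From mathcomp Require Import all_boot all_order all_algebra.
Set Implicit Arguments. Unset Strict Implicit. Unset Printing Implicit Defensive.
Import Order.TTheory GRing.Theory Num.Theory.
Local Open Scope ring_scope.

Definition dotv (R : rcfType) (n : nat) (u v : 'cV[R]_n) : R := (u^T *m v) 0 0.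
Definition vnorm (R : rcfType) (n : nat) (v : 'cV[R]_n) : R := Num.sqrt (dotv v v).

(* Moore-Penrose inverse: X is the (unique) matrix satisfying the four
   Penrose conditions for A (real case, so adjoint = transpose). *)
Definition is_MP_inverse (R : rcfType) (m n : nat) (A : 'M[R]_(m, n)) (X : 'M[R]_(n, m)) : Prop :=
  [/\ A *m X *m A = A, X *m A *m X = X, (A *m X)^T = A *m X & (X *m A)^T = X *m A].

Definition LG_feasible (R : rcfType) (n : nat) (H : 'M[R]_n) (g0 : 'cV[R]_n) (gamma : R)
  (lam : R) (y : 'cV[R]_n) : Prop :=
  (H - lam%:M) *m y = - g0 /\ vnorm y = gamma.

Definition LG_minimizer (R : rcfType) (n : nat) (H : 'M[R]_n) (g0 : 'cV[R]_n) (gamma : R)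
  (lam : R) (y : 'cV[R]_n) : Prop :=
  LG_feasible H g0 gamma lam y /\
  forall lam' y', LG_feasible H g0 gamma lam' y' -> lam <= lam'.

Definition QEP_feasible (R : rcfType) (n : nat) (H : 'M[R]_n) (g0 : 'cV[R]_n) (gamma : R)
  (lam : R) (w : 'cV[R]_n) : Prop :=
  w != 0 /\
  (H - lam%:M) *m ((H - lam%:M) *m w) = gamma ^- 2 *: (g0 *m g0^T *m w).

Definition QEP_minimizer (R : rcfType) (n : nat) (H : 'M[R]_n) (g0 : 'cV[R]_n) (gamma : R)
  (lam : R) (w : 'cV[R]_n) : Prop :=
  QEP_feasible H g0 gamma lam w /\
  forall lam' w', QEP_feasible H g0 gamma lam' w' -> lam <= lam'.

(* For l < lmin the matrix H - l is invertible, and y |-> (H - l)^-1 y and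
   w |-> -gamma^2 (H - l) w / (g0^T w) exchange the feasible points of pLGopt and
   pQEPmin (for w = (H - l)^-1 y one has g0^T w = -gamma^2).  A QEP-feasible pair with
   g0^T w = 0 has (H - l) w = 0, so l >= lmin, and at l = lmin every eigenvector
   is QEP-feasible as soon as pLGopt is feasible there.  Hence both problems have
   the same feasible values below lmin, and it remains to show that pLGopt is
   feasible at some l <= lmin.  If it is not feasible below lmin, then
   x(l) = -(H - l)^-1 g0 has |x(l)| < gamma for every l < lmin: the polynomial
   gamma^2 det(H - l)^2 - |adj(H - l) g0|^2 is positive far to the left, so a
   point with |x(l)| >= gamma would produce a root, i.e. a feasible point.
   Letting l tend to lmin, coercivity of H - l shows that g0 is orthogonal to
   ker(H - lmin) and that the solution of (H - lmin) x = -g0 lying in the range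
   of H - lmin has |x| <= gamma; adding a multiple of an eigenvector puts it on
   the sphere of radius gamma. *)

From HB Require Import structures.
From mathcomp Require Import all_boot all_order all_algebra.
From mathcomp Require Import ring lra.
From mathcomp.real_closed Require Import complex.
From Stdlib Require Import Classical.
Set Implicit Arguments. Unset Strict Implicit. Unset Printing Implicit Defensive.
Import Order.TTheory GRing.Theory Num.Theory.
Local Open Scope ring_scope.

Section InnerProduct.
Variables (R : rcfType) (n : nat).
Implicit Types (u v w : 'cV[R]_n) (A : 'M[R]_n).

Lemma dotvE u v : dotv u v = \sum_i u i 0 * v i 0.
Proof. by rewrite /dotv mxE; apply: eq_bigr => i _; rewrite mxE. Qed.

Lemma dotvC u v : dotv u v = dotv v u.
Proof. by rewrite !dotvE; apply: eq_bigr => i _; rewrite mulrC. Qed.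

Lemma dotvDr u v w : dotv u (v + w) = dotv u v + dotv u w.
Proof. by rewrite /dotv mulmxDr mxE. Qed.

Lemma dotvDl u v w : dotv (v + w) u = dotv v u + dotv w u.
Proof. by rewrite dotvC dotvDr !(dotvC u). Qed.

Lemma dotvZr a u v : dotv u (a *: v) = a * dotv u v.
Proof. by rewrite /dotv -scalemxAr mxE. Qed.

Lemma dotvZl a u v : dotv (a *: u) v = a * dotv u v.
Proof. by rewrite dotvC dotvZr dotvC. Qed.

Lemma dotvNr u v : dotv u (- v) = - dotv u v.
Proof. by rewrite -scaleN1r dotvZr mulN1r. Qed.

Lemma dotvNl u v : dotv (- u) v = - dotv u v.
Proof. by rewrite dotvC dotvNr dotvC. Qed.

Lemma dotvBr u v w : dotv u (v - w) = dotv u v - dotv u w.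
Proof. by rewrite dotvDr dotvNr. Qed.

Lemma dotvBl u v w : dotv (v - w) u = dotv v u - dotv w u.
Proof. by rewrite dotvDl dotvNl. Qed.

Lemma dotv0r u : dotv u 0 = 0.
Proof. by rewrite /dotv mulmx0 mxE. Qed.

Lemma dotv0l u : dotv 0 u = 0.
Proof. by rewrite dotvC dotv0r. Qed.

Lemma dotv_mulmxl A u v : dotv (A *m u) v = dotv u (A^T *m v).
Proof. by rewrite /dotv trmx_mul mulmxA. Qed.

Lemma dotv_ge0 u : 0 <= dotv u u.
Proof. by rewrite dotvE; apply: sumr_ge0 => i _; rewrite -expr2 sqr_ge0. Qed.

Lemma dotv_eq0 u : (dotv u u == 0) = (u == 0).
Proof.
apply/idP/idP => [|/eqP->]; last by rewrite dotv0r.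
rewrite dotvE psumr_eq0 => [/allP u0|i _]; last by rewrite -expr2 sqr_ge0.
apply/eqP/matrixP => i j; rewrite ord1 mxE.
by have := u0 i (mem_index_enum i); rewrite /= -expr2 sqrf_eq0 => /eqP.
Qed.

Lemma mulmx_outer (g h : 'cV[R]_n) w : g *m h^T *m w = dotv h w *: g.
Proof. by rewrite -mulmxA [h^T *m w]mx11_scalar mul_mx_scalar. Qed.

Lemma vnorm_ge0 u : 0 <= vnorm u.
Proof. exact: sqrtr_ge0. Qed.

Lemma sqr_vnorm u : vnorm u ^+ 2 = dotv u u.
Proof. by rewrite /vnorm sqr_sqrtr // dotv_ge0. Qed.

Lemma vnorm_sqrE u (c : R) : 0 <= c -> dotv u u = c ^+ 2 -> vnorm u = c.
Proof. by move=> c0 uc; rewrite /vnorm uc sqrtr_sqr ger0_norm. Qed.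

Lemma vnorm_eq0 u : (vnorm u == 0) = (u == 0).
Proof. by rewrite /vnorm sqrtr_eq0 -dotv_eq0 eq_le dotv_ge0 andbT. Qed.

Lemma vnormZ a u : vnorm (a *: u) = `|a| * vnorm u.
Proof. by rewrite /vnorm dotvZl dotvZr mulrA -expr2 sqrtrM ?sqr_ge0 // sqrtr_sqr. Qed.

Lemma vnormN u : vnorm (- u) = vnorm u.
Proof. by rewrite -scaleN1r vnormZ normrN1 mul1r. Qed.

Lemma dotv_sqr_le u v : dotv u v ^+ 2 <= dotv u u * dotv v v.
Proof.
have [->|u0] := eqVneq u 0; first by rewrite !dotv0l expr0n mul0r.
set a := dotv u u; set b := dotv v v; set c := dotv u v.
have a_gt0 : 0 < a by rewrite lt_def dotv_eq0 u0 dotv_ge0.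
have := dotv_ge0 (a *: v - c *: u).
rewrite !(dotvBl, dotvBr, dotvZl, dotvZr) -/a -/b -/c (dotvC v u) -/c => h.
have : 0 <= a * (a * b - c ^+ 2) by move: h; congr (_ <= _); ring.
by rewrite pmulr_rge0 // subr_ge0.
Qed.

Lemma normr_dotv_le u v : `|dotv u v| <= vnorm u * vnorm v.
Proof.
rewrite -ler_sqr ?nnegrE ?mulr_ge0 ?vnorm_ge0 //.
by rewrite real_normK ?num_real // exprMn !sqr_vnorm dotv_sqr_le.
Qed.

Lemma vnormD u v : vnorm (u + v) <= vnorm u + vnorm v.
Proof.
rewrite -ler_sqr ?nnegrE ?addr_ge0 ?vnorm_ge0 //.
rewrite sqr_vnorm !(dotvDl, dotvDr) sqrrD !sqr_vnorm (dotvC v u).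
have := normr_dotv_le u v; have := ler_norm (dotv u v); lra.
Qed.

Lemma vnorm_orth_lift x v (c : R) : 0 <= c -> dotv x v = 0 -> v != 0 -> vnorm x <= c ->
  vnorm (x + (Num.sqrt (c ^+ 2 - vnorm x ^+ 2) / vnorm v) *: v) = c.
Proof.
move=> c0 xv v0 xc; apply: vnorm_sqrE => //.
have nv0 : vnorm v != 0 by rewrite vnorm_eq0.
have s0 : 0 <= c ^+ 2 - vnorm x ^+ 2 by rewrite subr_ge0 ler_sqr ?nnegrE ?vnorm_ge0.
move: (sqr_sqrtr s0); set s := Num.sqrt _ => s2.
rewrite !(dotvDl, dotvDr, dotvZl, dotvZr) xv (dotvC v x) xv -!sqr_vnorm.
by rewrite !mulr0 !add0r addr0 mulrA -expr2 exprMn s2; field.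
Qed.

Lemma sym_orth_kernel_range (S : 'M[R]_n) (g : 'cV[R]_n) : S^T = S ->
  (forall v, S *m v = 0 -> dotv v g = 0) -> exists z, g = S *m z.
Proof.
move=> ST g_orth; have : (g^T <= S)%MS.
  rewrite submxE; move: (cokermx S) (mulmx_coker S) => C SC.
  apply/eqP/matrixP => i j; rewrite ord1 [RHS]mxE.
  have -> : (g^T *m C) 0 j = dotv g (col j C).
    by rewrite /dotv colE mulmxA -colE [RHS]mxE.
  by rewrite dotvC; apply: g_orth; rewrite colE mulmxA SC mul0mx.
by case/submxP => D gD; exists D^T; rewrite -ST -trmx_mul -gD trmxK.
Qed.

Lemma le0_epsM (a K : R) : 0 <= K -> (forall e, 0 < e -> a <= e * K) -> a <= 0.
Proof.
move=> K0 aK; rewrite leNgt; apply/negP => a0.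
have e0 : 0 < a / (K + 1) by rewrite divr_gt0 // ltr_wpDl.
have := aK _ e0; rewrite mulrAC ler_pdivlMr ?ltr_wpDl // mulrDr mulr1; lra.
Qed.

End InnerProduct.

Section NormalQuadraticForm.
Variables (C : numClosedFieldType) (n : nat) (A : 'M[C]_n).
Hypothesis A_normal : A \is normalmx.
Local Open Scope sesquilinear_scope.

Let P := spectralmx A.
Let d := spectral_diag A.

Lemma spectral_diag_eigenvalue i : eigenvalue A (d 0 i).
Proof.
have PA : P *m A = diag_mx d *m P.
  by rewrite {1}(orthomx_spectralP A_normal) !mulmxA mulmxV ?spectral_unit ?mul1mx.
apply/eigenvalueP; exists (row i P).
  by rewrite -row_mul PA row_mul row_diag_mx -scalemxAl -rowE.
apply/eqP => /(congr1 (mulmx^~ (invmx P))).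
rewrite -row_mul mulmxV ?spectral_unit // mul0mx row1 => /matrixP/(_ 0 i).
by rewrite !mxE !eqxx /= => /eqP; rewrite oner_eq0.
Qed.

Lemma normalmx_quad_ge (m : C) : (forall i, m <= d 0 i) ->
  forall v : 'cV[C]_n, m * (v ^t* *m v) 0 0 <= (v ^t* *m A *m v) 0 0.
Proof.
move=> m_le v; have Pu : P \is unitarymx := spectral_unitarymx A.
have iP : invmx P = P ^t* := invmx_unitary Pu.
set z := P *m v.
have vz : v ^t* *m P ^t* = z ^t* by rewrite /z trmx_mul map_mxM.
have PtP : P ^t* *m P = 1%:M by rewrite -iP mulVmx ?spectral_unit.
have -> : v ^t* *m v = z ^t* *m z.
  by rewrite -vz /z !mulmxA -(mulmxA _ _ P) PtP mulmx1.
have -> : v ^t* *m A *m v = z ^t* *m diag_mx d *m z.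
  by rewrite {1}(orthomx_spectralP A_normal) iP -vz /z !mulmxA.
clearbody z; rewrite mul_mx_diag !mxE mulr_sumr -subr_ge0 -sumrB.
apply: sumr_ge0 => k _; rewrite !mxE.
have -> : (z k 0)^* * d 0 k * z k 0 - m * ((z k 0)^* * z k 0)
    = (d 0 k - m) * (z k 0 * (z k 0)^*) by ring.
by rewrite mulr_ge0 ?subr_ge0 ?m_le ?mul_conjC_ge0.
Qed.

End NormalQuadraticForm.

Section RealSymmetric.
Variables (R : rcfType) (n : nat).
Local Notation realC := (real_complex R).
Local Open Scope complex_scope.
Local Open Scope sesquilinear_scope.

Lemma eigenvalue_complexR (H : 'M[R]_n) (r : R) :
  eigenvalue (map_mx realC H) r%:C = eigenvalue H r.
Proof. by rewrite !eigenvalue_root_char -map_char_poly fmorph_root. Qed.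

Lemma map_mx_realC_hermitian (H : 'M[R]_n) : H^T = H -> map_mx realC H \is hermsymmx.
Proof.
move=> HT; rewrite qualifE /= expr0 scale1r; apply/eqP/matrixP => i j; rewrite !mxE.
by rewrite -[in LHS]HT mxE; apply: esym (conjc_real _).
Qed.

Lemma sym_rayleigh_ge (H : 'M[R]_n) (m : R) : H^T = H ->
  (forall a, eigenvalue H a -> m <= a) -> forall u, m * dotv u u <= dotv u (H *m u).
Proof.
move=> HT m_le u; have Hc_herm := map_mx_realC_hermitian HT.
have d_ge i : m%:C <= spectral_diag (map_mx realC H) 0 i.
  have /complex_realP [r dr] := mxOverP (hermitian_spectral_diag_real Hc_herm) 0 i.
  have := spectral_diag_eigenvalue (hermitian_normalmx Hc_herm) i.
  by rewrite dr eigenvalue_complexR lecR => /m_le.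
have := normalmx_quad_ge (hermitian_normalmx Hc_herm) d_ge (map_mx realC u).
have uT : (map_mx realC u) ^t* = map_mx realC u^T.
  by apply/matrixP => i j; rewrite !mxE; apply: conjc_real.
by rewrite uT -!map_mxM ![map_mx _ _ 0 0]mxE -rmorphM lecR /dotv mulmxA.
Qed.

End RealSymmetric.

Lemma poly_ivt_max (R : rcfType) (p : {poly R}) a b : p.[a] <= 0 <= p.[b] ->
  exists2 x, x <= Num.max a b & root p x.
Proof.
move=> pab; have [ab|ba] := leP a b.
  have [x /andP[_ xb] px] := poly_ivt ab pab.
  by exists x; rewrite // le_max xb orbT.
case/andP: pab => pa pb.
have [x /andP[_ xa] px] : exists2 x, b <= x <= a & root (- p) x.
  by apply: poly_ivt; [exact: ltW | rewrite !hornerN oppr_le0 oppr_ge0 pb pa].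
by exists x; rewrite ?le_max ?xa // -rootN.
Qed.

Lemma MP_inverse_factor (R : rcfType) m n (A : 'M[R]_(m, n)) X : is_MP_inverse A X ->
  X = A^T *m X^T *m X.
Proof. by case=> _ XAX _ XA_sym; rewrite -trmx_mul XA_sym XAX. Qed.

Section ShiftedMatrix.
Variables (R : rcfType) (n : nat) (H : 'M[R]_n) (g0 : 'cV[R]_n) (gamma lmin : R).
Hypotheses (HT : H^T = H) (gamma_gt0 : 0 < gamma).
Hypotheses (lmin_eig : eigenvalue H lmin) (lmin_le : forall a, eigenvalue H a -> lmin <= a).

Local Notation A l := (H - l%:M).
Local Notation LGf := (LG_feasible H g0 gamma).
Local Notation QEPf := (QEP_feasible H g0 gamma).
Local Notation LGmin := (LG_minimizer H g0 gamma).
Local Notation QEPmin := (QEP_minimizer H g0 gamma).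
Implicit Types (u v w x y : 'cV[R]_n).

Lemma trmx_shift l : (A l)^T = A l.
Proof. by rewrite linearB /= tr_scalar_mx HT. Qed.

Lemma dotv_shift l u v : dotv (A l *m u) v = dotv u (A l *m v).
Proof. by rewrite dotv_mulmxl trmx_shift. Qed.

Lemma mulmx_shift l u : A l *m u = H *m u - l *: u.
Proof. by rewrite mulmxBl mul_scalar_mx. Qed.

Lemma mulmx_shiftB l e u : A (l - e) *m u = A l *m u + e *: u.
Proof.
by rewrite !mulmx_shift scalerBl opprB; apply/matrixP => i j; rewrite !mxE; ring.
Qed.

Lemma sym_eigenvalueP a :
  reflect (exists2 w : 'cV_n, w != 0 & A a *m w = 0) (eigenvalue H a).
Proof.
apply: (iffP eigenvalueP) => [[v vH v0] | [w w0 Aw]].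
  exists v^T; first by rewrite -(inj_eq (@trmx_inj _ _ _)) trmxK trmx0.
  by rewrite mulmx_shift -{1}HT -trmx_mul vH linearZ subrr.
exists w^T; last by rewrite -(inj_eq (@trmx_inj _ _ _)) trmxK trmx0.
by apply/eqP; rewrite -subr_eq0 -mul_mx_scalar -mulmxBr -trmx_shift -trmx_mul Aw trmx0.
Qed.

Lemma unitmx_shift l : l < lmin -> A l \in unitmx.
Proof.
move=> l_lt; rewrite unitmxE unitfE; apply/negP => /det0P [v v0 vA].
suff /lmin_le : eigenvalue H l by rewrite leNgt l_lt.
apply/eigenvalueP; exists v => //.
by apply/eqP; rewrite -subr_eq0 -mul_mx_scalar -mulmxBr vA.
Qed.

Lemma shift_coercive e u : 0 < e -> e * vnorm u <= vnorm (A (lmin - e) *m u).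
Proof.
move=> e_gt0; rewrite -ler_sqr ?nnegrE ?mulr_ge0 ?vnorm_ge0 //; last exact: ltW.
rewrite exprMn !sqr_vnorm mulmx_shiftB !(dotvDl, dotvDr, dotvZl, dotvZr).
have psd : 0 <= dotv u (A lmin *m u).
  by rewrite mulmx_shift dotvBr dotvZr subr_ge0 (sym_rayleigh_ge HT lmin_le).
have := dotv_ge0 (A lmin *m u); rewrite [dotv (A lmin *m u) u]dotvC.
have : 0 <= e * dotv u (A lmin *m u) by rewrite mulr_ge0 // ltW.
nra.
Qed.

Lemma LG_QEP_feasible l y : LGf l y -> l < lmin -> QEPf l (invmx (A l) *m y).
Proof.
move=> [Ay ny] l_lt; have A_unit := unitmx_shift l_lt.
set w := invmx (A l) *m y; have Aw : A l *m w = y by rewrite mulKVmx.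
have gw : dotv g0 w = - gamma ^+ 2.
  rewrite dotvC dotv_mulmxl trmx_inv trmx_shift -[g0]opprK -Ay mulmxN mulKmx //.
  by rewrite dotvNr -sqr_vnorm ny.
split.
  apply: contraTneq gamma_gt0 => w0.
  by rewrite -ny -Aw w0 mulmx0 /vnorm dotv0r sqrtr0 ltxx.
rewrite Aw Ay mulmx_outer gw scalerA mulrN mulVf ?expf_neq0 ?gt_eqF //.
by rewrite scaleN1r.
Qed.

Lemma QEP_LG_feasible l w : QEPf l w -> dotv g0 w != 0 ->
  LGf l (- (gamma ^+ 2 / dotv g0 w) *: (A l *m w)).
Proof.
move=> [_ AAw] gw_neq0; set c := dotv g0 w in gw_neq0 *.
have AAw' : A l *m (A l *m w) = (gamma ^-2 * c) *: g0 by rewrite AAw mulmx_outer scalerA.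
have gamma0 : gamma != 0 by rewrite gt_eqF.
split.
  rewrite -scalemxAr AAw' scalerA.
  have -> : - (gamma ^+ 2 / c) * (gamma ^-2 * c) = -1 by field; rewrite gamma0 gw_neq0.
  by rewrite scaleN1r.
apply: vnorm_sqrE; first exact: ltW.
rewrite dotvZl dotvZr dotv_shift AAw' dotvZr (dotvC w) -/c.
by field; rewrite gamma0 gw_neq0.
Qed.

Lemma QEP_feasible_orth l w : QEPf l w -> dotv g0 w = 0 -> A l *m w = 0.
Proof.
move=> [_ AAw] gw0; apply/eqP; rewrite -dotv_eq0 dotv_shift AAw mulmx_outer gw0.
by rewrite scale0r scaler0 dotv0r.
Qed.

Lemma QEP_feasible_orth_ge l w : QEPf l w -> dotv g0 w = 0 -> lmin <= l.
Proof.
move=> Qw gw0; apply/lmin_le/sym_eigenvalueP; exists w; first by case: Qw.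
exact: QEP_feasible_orth.
Qed.

Lemma eigen_QEP_feasible y w : LGf lmin y -> w != 0 -> A lmin *m w = 0 -> QEPf lmin w.
Proof.
move=> [Ay _] w0 Aw; split => //.
rewrite Aw mulmx0 mulmx_outer -[g0]opprK -Ay dotvNl dotv_shift Aw dotv0r oppr0.
by rewrite scale0r scaler0.
Qed.

Lemma LG_feasible_add_kernel l x v : A l *m x = - g0 -> vnorm x <= gamma ->
  v != 0 -> A l *m v = 0 -> dotv x v = 0 ->
  LGf l (x + (Num.sqrt (gamma ^+ 2 - vnorm x ^+ 2) / vnorm v) *: v).
Proof.
move=> Ax x_le v0 Av xv; split; last exact: vnorm_orth_lift (ltW gamma_gt0) xv v0 x_le.
by rewrite mulmxDr -scalemxAr Av scaler0 addr0.
Qed.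

Definition shift_sol l := - (invmx (A l) *m g0).

Lemma shift_solP l : l < lmin -> A l *m shift_sol l = - g0.
Proof. by move=> l_lt; rewrite mulmxN mulKVmx ?unitmx_shift. Qed.

Lemma secular_poly : exists Q : {poly R}, forall t, t < lmin ->
  Q.[t] = \det (A t) ^+ 2 * (gamma ^+ 2 - vnorm (shift_sol t) ^+ 2).
Proof.
pose Ap : 'M[{poly R}]_n := map_mx polyC H - 'X%:M.
pose gp := map_mx polyC g0.
exists ((gamma ^+ 2)%:P * \det Ap ^+ 2 - ((\adj Ap *m gp)^T *m (\adj Ap *m gp)) 0 0).
move=> t t_lt; have evalK : horner_eval t \o polyC =1 id := fun c => hornerC c t.
have mapA : map_mx (horner_eval t) Ap = A t.
  by rewrite map_mxB map_scalar_mx /= horner_evalE hornerX -map_mx_comp (map_mx_id evalK).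
have mapg : map_mx (horner_eval t) gp = g0 by rewrite -map_mx_comp (map_mx_id evalK).
have detA0 : \det (A t) != 0 by rewrite -unitfE -unitmxE unitmx_shift.
have evalE (M : 'M[{poly R}]_1) : horner_eval t (M 0 0) = map_mx (horner_eval t) M 0 0.
  by rewrite mxE.
rewrite -horner_evalE rmorphB rmorphM !rmorphXn /= {1}horner_evalE hornerC.
rewrite -det_map_mx mapA evalE map_mxM -map_trmx map_mxM map_mx_adj.
rewrite mapA mapg -/(dotv _ _) sqr_vnorm /shift_sol /invmx unitmx_shift //.
rewrite -scalemxAl dotvNl dotvNr opprK dotvZl dotvZr.
by field.
Qed.

Lemma shift_sol_far_left : exists2 e, 0 < e & vnorm (shift_sol (lmin - e)) < gamma.
Proof.
pose e := vnorm g0 / gamma + 1.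
have e_gt0 : 0 < e by rewrite ltr_wpDl // divr_ge0 ?vnorm_ge0 ?ltW.
exists e => //; rewrite -(ltr_pM2l e_gt0); apply: le_lt_trans (shift_coercive _ e_gt0) _.
rewrite shift_solP ?vnormN ?ltrBlDr ?ltrDl //.
by rewrite /e mulrDl mul1r divfK ?gt_eqF // ltrDl.
Qed.

Section NoFeasibleBelow.
Hypothesis LG_none_below : forall l y, l < lmin -> ~ LGf l y.

(* Left of [lmin], [secular_poly] has the sign of [gamma - |shift_sol l|] and its
   roots are feasible points of pLGopt. *)
Lemma shift_sol_lt e : 0 < e -> vnorm (shift_sol (lmin - e)) < gamma.
Proof.
move=> e_gt0; rewrite ltNge; apply/negP => sol_ge.
have [Q Qt] := secular_poly; have [e0 e0_gt0 sol0_lt] := shift_sol_far_left.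
have left_lt f : 0 < f -> lmin - f < lmin by move=> f0; rewrite ltrBlDr ltrDl.
have gamma_ge0 := ltW gamma_gt0.
have [r r_le Qr] : exists2 r, r <= Num.max (lmin - e) (lmin - e0) & root Q r.
  apply: poly_ivt_max; rewrite !Qt ?left_lt //; apply/andP; split.
    by rewrite mulr_ge0_le0 ?sqr_ge0 // subr_le0 ler_sqr ?nnegrE ?vnorm_ge0.
  by rewrite mulr_ge0 ?sqr_ge0 // subr_ge0 ler_sqr ?nnegrE ?vnorm_ge0 // ltW.
have r_lt : r < lmin by apply: le_lt_trans r_le _; rewrite gt_max !left_lt.
apply: (LG_none_below r_lt); split; first exact: shift_solP.
have detA0 : \det (A r) != 0 by rewrite -unitfE -unitmxE unitmx_shift.
move: Qr; rewrite rootE Qt // mulf_eq0 expf_eq0 (negbTE detA0) /= subr_eq0.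
by rewrite eqrXn2 ?vnorm_ge0 // => /eqP.
Qed.

Lemma kernel_orth_g0 v : A lmin *m v = 0 -> dotv v g0 = 0.
Proof.
move=> Av; apply/eqP; rewrite -normr_le0.
apply: (le0_epsM (K := vnorm v * gamma)); first by rewrite mulr_ge0 ?vnorm_ge0 ?ltW.
move=> e e_gt0; have e_left : lmin - e < lmin by rewrite ltrBlDr ltrDl.
rewrite -[g0]opprK -(shift_solP e_left) dotvNr normrN -dotv_shift mulmx_shiftB Av.
rewrite add0r dotvZl normrM gtr0_norm //; apply: ler_wpM2l; first exact: ltW.
apply: le_trans (normr_dotv_le _ _) _; apply: ler_wpM2l; first exact: vnorm_ge0.
exact: ltW (shift_sol_lt e_gt0).
Qed.

Lemma g0_in_range : exists z, g0 = A lmin *m (A lmin *m z).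
Proof.
have [z ->] : exists z, g0 = (A lmin *m A lmin) *m z.
  apply: sym_orth_kernel_range; first by rewrite trmx_mul trmx_shift.
  move=> v AAv; apply: kernel_orth_g0; apply/eqP.
  by rewrite -dotv_eq0 dotv_shift mulmxA AAv dotv0r.
by exists z; rewrite mulmxA.
Qed.

(* [x] is the limit of [shift_sol (lmin - e)] as [e -> 0]: the error [d] below
   satisfies [A (lmin - e) d = - e^2 z], hence [|d| <= e |z|] by coercivity. *)
Lemma range_sol_vnorm_le x z : x = A lmin *m z -> A lmin *m x = - g0 -> vnorm x <= gamma.
Proof.
move=> xz Ax; rewrite -subr_le0; apply: (le0_epsM (K := 2 * vnorm z)).
  by rewrite mulr_ge0 ?vnorm_ge0.
move=> e e_gt0; have e_left : lmin - e < lmin by rewrite ltrBlDr ltrDl.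
set xe := shift_sol (lmin - e); pose d := x - xe - e *: z.
have Ad : A (lmin - e) *m d = - (e ^+ 2) *: z.
  rewrite /d !mulmxBr -scalemxAr shift_solP // !mulmx_shiftB Ax -xz.
  by apply/matrixP => i j; rewrite !mxE; ring.
have d_le : vnorm d <= e * vnorm z.
  have := shift_coercive d e_gt0; rewrite Ad vnormZ normrN ger0_norm ?sqr_ge0 //.
  by rewrite expr2 -mulrA ler_pM2l.
have -> : x = xe + d + e *: z by rewrite /d; apply/matrixP => i j; rewrite !mxE; ring.
have := vnormD (xe + d) (e *: z); have := vnormD xe d.
rewrite vnormZ gtr0_norm //; have := shift_sol_lt e_gt0; rewrite -/xe; lra.
Qed.

Lemma LG_feasible_lmin : exists y, LGf lmin y.
Proof.
have [z g0E] := g0_in_range; have /sym_eigenvalueP [v v0 Av] := lmin_eig.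
have Ax : A lmin *m (A lmin *m - z) = - g0 by rewrite !mulmxN g0E.
have x_le := range_sol_vnorm_le (erefl _) Ax.
have xv : dotv (A lmin *m - z) v = 0 by rewrite dotv_shift Av dotv0r.
by eexists; apply: (LG_feasible_add_kernel Ax x_le v0 Av xv).
Qed.

End NoFeasibleBelow.

Lemma LG_feasible_le_lmin : exists l y, l <= lmin /\ LGf l y.
Proof.
have [[l [y [l_lt Ly]]] | LG_none_below] :=
  classic (exists l y, l < lmin /\ LGf l y).
  by exists l, y; split=> //; apply: ltW.
have [y Ly] : exists y, LGf lmin y.
  by apply: LG_feasible_lmin => l y l_lt Ly; apply: LG_none_below; exists l, y.
by exists lmin, y.
Qed.

Lemma QEP_feasible_le_lmin : exists l w, l <= lmin /\ QEPf l w.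
Proof.
have [l [y [l_le Ly]]] := LG_feasible_le_lmin.
move: l_le; rewrite le_eqVlt => /predU1P [l_eq | l_lt].
  have /sym_eigenvalueP [w w0 Aw] := lmin_eig; rewrite l_eq in Ly.
  by exists lmin, w; split=> //; apply: eigen_QEP_feasible Ly w0 Aw.
by exists l, (invmx (A l) *m y); split; [apply: ltW | apply: LG_QEP_feasible].
Qed.

Lemma LG_minimizer_le l y : LGmin l y -> l <= lmin.
Proof.
case=> _ l_min; have [l' [y' [l'_le Ly']]] := LG_feasible_le_lmin.
exact: le_trans (l_min _ _ Ly') l'_le.
Qed.

Lemma QEP_minimizer_le l w : QEPmin l w -> l <= lmin.
Proof.
case=> _ l_min; have [l' [w' [l'_le Qw']]] := QEP_feasible_le_lmin.
exact: le_trans (l_min _ _ Qw') l'_le.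
Qed.

Lemma LG_lb_QEP_lb l : l <= lmin -> (forall l' y, LGf l' y -> l <= l') ->
  forall l' w, QEPf l' w -> l <= l'.
Proof.
move=> l_le LG_lb l' w Qw; have [gw0 | gw_neq0] := eqVneq (dotv g0 w) 0.
  exact: le_trans l_le (QEP_feasible_orth_ge Qw gw0).
exact: LG_lb _ _ (QEP_LG_feasible Qw gw_neq0).
Qed.

Lemma QEP_lb_LG_lb l : l <= lmin -> (forall l' w, QEPf l' w -> l <= l') ->
  forall l' y, LGf l' y -> l <= l'.
Proof.
move=> l_le QEP_lb l' y Ly; have [l'_lt | lmin_le'] := ltP l' lmin.
  exact: QEP_lb _ _ (LG_QEP_feasible Ly l'_lt).
exact: le_trans l_le lmin_le'.
Qed.

Lemma LG_minimizer_QEP l y : LGmin l y ->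
  (l < lmin /\ QEPmin l (invmx (A l) *m y)) \/
  (l = lmin /\ exists w : 'cV[R]_n, w != 0 /\ H *m w = lmin *: w /\ QEPmin l w).
Proof.
move=> Lmin; have l_le := LG_minimizer_le Lmin; case: Lmin => Ly LG_lb.
have QEP_lb := LG_lb_QEP_lb l_le LG_lb.
move: l_le; rewrite le_eqVlt => /predU1P [l_eq | l_lt]; [right | left]; last first.
  by split=> //; split; first exact: LG_QEP_feasible.
split=> //; have /sym_eigenvalueP [w w0 Aw] := lmin_eig.
exists w; split=> //; split; first by apply/eqP; rewrite -subr_eq0 -mulmx_shift Aw.
by split=> //; rewrite l_eq in Ly *; apply: eigen_QEP_feasible Ly w0 Aw.
Qed.

Lemma QEP_minimizer_LG l w : QEPmin l w -> dotv g0 w != 0 ->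
  LGmin l (- (gamma ^+ 2 / dotv g0 w) *: (A l *m w)).
Proof.
move=> Qmin gw_neq0; have l_le := QEP_minimizer_le Qmin; case: Qmin => Qw QEP_lb.
by split; [apply: QEP_LG_feasible | apply: QEP_lb_LG_lb].
Qed.

Lemma QEP_minimizer_LG_orth l w : QEPmin l w -> dotv g0 w = 0 ->
  forall X : 'M[R]_n, is_MP_inverse (A l) X ->
  let x := - (X *m g0) in
  vnorm x <= gamma /\
  LGmin l (x + (Num.sqrt (gamma ^+ 2 - vnorm x ^+ 2) / vnorm w) *: w).
Proof.
move=> Qmin gw0 X MP x; have l_le := QEP_minimizer_le Qmin; case: Qmin => Qw QEP_lb.
have l_eq : l = lmin by apply/le_anti; rewrite l_le (QEP_feasible_orth_ge Qw gw0).
have Aw := QEP_feasible_orth Qw gw0.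
rewrite l_eq in MP Aw QEP_lb *.
have LG_none_below l' y : l' < lmin -> ~ LGf l' y.
  by move=> l'_lt Ly; have := QEP_lb _ _ (LG_QEP_feasible Ly l'_lt); rewrite leNgt l'_lt.
have [z g0E] := g0_in_range LG_none_below.
have Ax : A lmin *m x = - g0.
  by case: MP => AXA _ _ _; rewrite /x mulmxN g0E !mulmxA AXA.
have xE : x = A lmin *m - (X^T *m (X *m g0)).
  by rewrite /x {1}(MP_inverse_factor MP) trmx_shift mulmxN !mulmxA.
have x_le := range_sol_vnorm_le LG_none_below xE Ax.
split=> //; split; last exact: QEP_lb_LG_lb.
have xw : dotv x w = 0 by rewrite xE dotv_shift Aw dotv0r.
by case: Qw => w0 _; apply: LG_feasible_add_kernel Ax x_le w0 Aw xw.
Qed.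

End ShiftedMatrix.

Theorem theorem2p5 (R : rcfType) (n : nat) (H : 'M[R]_n) (g0 : 'cV[R]_n) (gamma : R)
  (lmin : R) :
  H^T = H -> g0 != 0 -> 0 < gamma ->
  (* lmin = lambda_min(H): an eigenvalue of H below all eigenvalues of H *)
  eigenvalue H lmin -> (forall a, eigenvalue H a -> lmin <= a) ->
  (forall lam y, LG_minimizer H g0 gamma lam y ->
     (lam < lmin /\ QEP_minimizer H g0 gamma lam (invmx (H - lam%:M) *m y)) \/
     (lam = lmin /\ exists w : 'cV[R]_n,
          w != 0 /\ H *m w = lmin *: w /\ QEP_minimizer H g0 gamma lam w))
  /\
  (forall lam w, QEP_minimizer H g0 gamma lam w ->
     (dotv g0 w != 0 ->
        LG_minimizer H g0 gamma lam
          (- (gamma ^+ 2 / dotv g0 w) *: ((H - lam%:M) *m w))) /\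
     (dotv g0 w = 0 ->
        forall X : 'M[R]_n, is_MP_inverse (H - lam%:M) X ->
        let x := - (X *m g0) in
        vnorm x <= gamma /\
        LG_minimizer H g0 gamma lam
          (x + (Num.sqrt (gamma ^+ 2 - vnorm x ^+ 2) / vnorm w) *: w))).
Proof.
move=> HT _ gamma_gt0 lmin_eig lmin_le.
split; first exact (LG_minimizer_QEP HT gamma_gt0 lmin_eig lmin_le).
move=> lam w Qmin; split; first exact (QEP_minimizer_LG HT gamma_gt0 lmin_eig lmin_le Qmin).
exact (QEP_minimizer_LG_orth HT gamma_gt0 lmin_eig lmin_le Qmin).
Qed.
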